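(* Let $\mathfrak{X}=(X,\{R_0,R_1,R_2,R_3,R_4\})$ be a skew-symmetric $4$-class association scheme with $R_1^\top=R_2$ and $R_3^\top=R_4$, and suppose that the character table of $\mathfrak X$ is of type $3$ (in the sense described in the context). Then the digraph $(X,R_i)$ has $5$ distinct eigenvalues for each $1\leq i\leq 4$.
   Context: An association scheme on a finite set $X$ is a partition of $X\times X$ into relations $R_0$ (diagonal), $R_1,\dots,R_d$ closed under transposition, with constant intersection numbers; skew-symmetric means $R_0$ is the only symmetric relation. Schemes with $\le4$ classes are commutative; the primitive idempotents $E_j$ of the Bose–Mesner algebra satisfy $A_iE_j=p_i(j)E_j$, and the character table has $(j,i)$-entry $p_i(j)$. The symmetrization $\tilde{\mathfrak X}=(X,\{R_0,R_1\cup R_2,R_3\cup R_4\})$ has character table with rows $(1,k_1,k_2)$, $(1,r_1,t_1)$, $(1,r_2,t_2)$ (rows $\tilde E_0,\tilde E_1,\tilde E_2$ with multiplicities $1,m_1,m_2$). It is known that the primitive idempotents of $\mathfrak X$ can be ordered so that its character table (columns $A_0,\dots,A_4$) has rows $(1,k_1/2,k_1/2,k_2/2,k_2/2)$, $(1,\rho,\bar\rho,\tau,\bar\tau)$, $(1,\sigma,\bar\sigma,\omega,\bar\omega)$, $(1,\bar\sigma,\sigma,\bar\omega,\omega)$, $(1,\bar\rho,\rho,\bar\tau,\tau)$, where one of three cases holds; type 3 is the case $\rho=(r_1+\sqrt{-y})/2$, $\tau=(t_1+\sqrt{-z})/2$, $\sigma=(r_2+\sqrt{-b})/2$, $\omega=(t_2-\sqrt{-c})/2$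 with $b,c,y,z$ all positive reals. Eigenvalues of a digraph $(X,R)$ are those of its $01$ adjacency matrix. *)

(* Complex numbers are modelled by algC (algebraic complex
   numbers), which contains all eigenvalues of integer matrices. *)
From HB Require Import structures.
From mathcomp Require Import all_boot all_order all_algebra all_field.
Set Implicit Arguments. Unset Strict Implicit. Unset Printing Implicit Defensive.
Import Order.TTheory GRing.Theory Num.Theory.
Local Open Scope ring_scope.

(* A 4-class scheme on X = 'I_n is given by the class function
   r : X -> X -> 'I_5, where R_i = [set (x,y) | r x y == i]. *)

Definition adj (n : nat) (r : 'I_n -> 'I_n -> 'I_5) (i : 'I_5) : 'M[algC]_n :=
  \matrix_(x, y) ((r x y == i)%:R : algC).

Definition is_assoc_scheme4 (n : nat) (r : 'I_n -> 'I_n -> 'I_5) : Prop :=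
  [/\ (forall x y, (r x y == 0) = (x == y)),
      (forall i : 'I_5, exists x y, r x y = i),
      (forall i : 'I_5, exists i' : 'I_5, forall x y, (r x y == i) = (r y x == i')) &
      (forall i j k : 'I_5, exists p : nat, forall x y, r x y = k ->
          #|[set z | (r x z == i) && (r z y == j)]| = p)].

Definition skew_1234 (n : nat) (r : 'I_n -> 'I_n -> 'I_5) : Prop :=
  forall x y, (r x y == 1 :> 'I_5) = (r y x == 2 :> 'I_5) /\
              (r x y == 3 :> 'I_5) = (r y x == 4 :> 'I_5).

(* E_0..E_4 are the primitive idempotents of the Bose-Mesner algebra and
   P (with (j,i)-entry P j i) is the corresponding character table:
   E_j lie in the span of the A_i, are nonzero, pairwise orthogonal
   idempotents summing to I, and A_i E_j = P j i E_j.  (Five such idempotents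
   in the 5-dimensional BM algebra are exactly its primitive idempotents.) *)
Definition char_table (n : nat) (r : 'I_n -> 'I_n -> 'I_5)
  (E : 'I_5 -> 'M[algC]_n) (P : 'I_5 -> 'I_5 -> algC) : Prop :=
  [/\ (forall j, exists c : 'I_5 -> algC, E j = \sum_i c i *: adj r i),
      (forall j, E j != 0),
      (forall j k, E j *m E k = (j == k)%:R *: E j),
      \sum_j E j = 1%:M &
      (forall i j, adj r i *m E j = P j i *: E j)].

Definition sqrtneg (y : algC) : algC := 'i * sqrtC y.

Definition row5 (a0 a1 a2 a3 a4 : algC) (i : 'I_5) : algC :=
  nth 0 [:: a0; a1; a2; a3; a4] i.

Definition type3_table (P : 'I_5 -> 'I_5 -> algC) : Prop :=
  exists k1 k2 r1 r2 t1 t2 b c y z : algC,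
    [/\ [/\ k1 \is Num.real, k2 \is Num.real, r1 \is Num.real, r2 \is Num.real
            & (t1 \is Num.real) && (t2 \is Num.real)],
        [/\ 0 < b, 0 < c, 0 < y & 0 < z] &
        (let rho := (r1 + sqrtneg y) / 2 in
        let tau := (t1 + sqrtneg z) / 2 in
        let sig := (r2 + sqrtneg b) / 2 in
        let om  := (t2 - sqrtneg c) / 2 in
        [/\ P 0 =1 row5 1 (k1 / 2) (k1 / 2) (k2 / 2) (k2 / 2),
            P 1 =1 row5 1 rho rho^* tau tau^*,
            P 2 =1 row5 1 sig sig^* om om^*,
            P 3 =1 row5 1 sig^* sig om^* om &
            P 4 =1 row5 1 rho^* rho tau^* tau])].

Definition num_distinct_eigenvalues (n : nat) (A : 'M[algC]_n) (m : nat) : Prop :=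
  exists s : seq algC, [/\ uniq s, size s = m & forall a, eigenvalue A a <-> a \in s].

(* The eigenvalues of A_i are the entries of column i of the character table,
   so it suffices that every column i <> 0 has distinct entries.  In type 3 such
   a column is [k/2; rho; sig; sig^*; rho^*] up to conjugation, or the same with
   tau and om, where rho, sig, tau, om are non-real; its entries are distinct as
   soon as r1 = rho + rho^* differs from r2 = sig + sig^* (resp. t1 from t2).
   The row sum of row j is the eigenvalue of the all-ones matrix J on E_j, and it
   can be nonzero only if E_j is a multiple of J, which happens for at most one j.
   Rows 1 and 4 (and rows 2 and 3) have equal sums, whence 1 + r1 + t1 = 0 =
   1 + r2 + t2.  Thus r1 = r2 forces t1 = t2, and then row 1 + row 4 = row 2 +
   row 3, contradicting the linear independence of the rows of P. *)

From HB Require Import structures.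
From mathcomp Require Import all_boot all_order all_algebra all_field.
From mathcomp Require Import ring.
Import Order.TTheory GRing.Theory Num.Theory.
Local Open Scope ring_scope.
Set Implicit Arguments.
Unset Strict Implicit.

Lemma ord5P (i : 'I_5) : i = 0 \/ i = 1 \/ i = 2 \/ i = 3 \/ i = 4.
Proof.
case: i => [[|[|[|[|[|//]]]]] lti];
  [left | right; left | do 2 right; left | do 3 right; left | do 4 right]; exact/val_inj.
Qed.

Lemma big_ord5 (V : nmodType) (f : 'I_5 -> V) :
  \sum_i f i = f 0 + f 1 + f 2 + f 3 + f 4.
Proof.
by rewrite !big_ord_recl big_ord0 addr0 !addrA; congr (f _ + f _ + f _ + f _ + f _);
  apply/val_inj.
Qed.

Lemma codom_ord5 (T : eqType) (f : 'I_5 -> T) : codom f = [:: f 0; f 1; f 2; f 3; f 4].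
Proof.
by rewrite codomE !enum_ordSl enum_ord0; congr [:: f _; f _; f _; f _; f _]; apply/val_inj.
Qed.

Lemma scalerIl (F : fieldType) (V : lmodType F) (v : V) :
  v != 0 -> injective ( *:%R^~ v : F -> V).
Proof.
move=> nz_v a b /eqP; rewrite -subr_eq0 -scalerBl scaler_eq0 (negbTE nz_v) orbF.
by rewrite subr_eq0 => /eqP.
Qed.

Lemma const1_mul_mx_const1 (R : comPzRingType) m n p q (X : 'M[R]_(n, p)) :
  const_mx 1 *m X *m const_mx 1 = (\sum_x \sum_y X x y) *: (const_mx 1 : 'M_(m, q)).
Proof.
apply/matrixP => i j; rewrite !mxE mulr1 [RHS]exchange_big; apply: eq_bigr => y _.
by rewrite !mxE mulr1; apply: eq_bigr => x _; rewrite !mxE mul1r.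
Qed.

Lemma const1_mul_const1 (R : pzSemiRingType) m n p :
  (const_mx 1 : 'M[R]_(m, n)) *m const_mx 1 = n%:R *: (const_mx 1 : 'M_(m, p)).
Proof.
apply/matrixP => i j; rewrite !mxE mulr1 (eq_bigr (fun=> 1)) => [|x _].
  by rewrite sumr_const card_ord.
by rewrite !mxE mulr1.
Qed.

Lemma uniq_conj_pairs (C : numClosedFieldType) (x a b : C) :
  x \is Num.real -> a \isn't Num.real -> b \isn't Num.real -> a + a^* != b + b^* ->
  uniq [:: x; a; b; b^*; a^*].
Proof.
move=> xR aNR bNR ab_neq.
have real_neq z : z \isn't Num.real -> x != z by apply: contraNneq => <-.
have conj_neq (z : C) : z \isn't Num.real -> z != z^* by rewrite eq_sym -CrealE.
rewrite /= !inE !negb_or !real_neq ?CrealJ // !conj_neq // (can_eq conjCK) /= !andbT.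
rewrite -andbA; apply/and4P.
by split; apply: contraNneq ab_neq => ->; rewrite ?conjCK // addrC.
Qed.

Lemma half_rect_nonreal (C : numClosedFieldType) (x v : C) :
  x \is Num.real -> v \is Num.real -> v != 0 -> (x + 'i * v) / 2 \isn't Num.real.
Proof.
move=> xR vR nz_v; apply: contra nz_v => /Creal_ImP.
rewrite ImMr ?rpredV ?rpred_nat // Im_rect // => /eqP.
by rewrite mulf_eq0 invr_eq0 pnatr_eq0 orbF.
Qed.

Section BoseMesner.

Variables (n : nat) (r : 'I_n -> 'I_n -> 'I_5).
Variables (E : 'I_5 -> 'M[algC]_n) (P : 'I_5 -> 'I_5 -> algC).
Hypothesis tableEP : char_table r E P.

Local Notation J := (const_mx 1 : 'M[algC]_n).

Lemma adj_spectral i : adj r i = \sum_j P j i *: E j.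
Proof.
have [_ _ _ sumE adjE] := tableEP.
by rewrite -[adj r i]mulmx1 -sumE mulmx_sumr; apply: eq_bigr => j _; apply: adjE.
Qed.

Lemma idem_mul_adj i j : E j *m adj r i = P j i *: E j.
Proof.
have [_ _ orthE _ _] := tableEP.
rewrite adj_spectral mulmx_sumr (bigD1 j) //= big1 => [|k nkj].
  by rewrite -scalemxAr orthE eqxx scale1r addr0.
by rewrite -scalemxAr orthE eq_sym (negbTE nkj) scale0r scaler0.
Qed.

Lemma eigenvalue_adjP i a : eigenvalue (adj r i) a <-> exists j, a = P j i.
Proof.
have [_ nzE _ sumE adjE] := tableEP; split.
  case/eigenvalueP => v vA nz_v.
  have [j /eqP ->|a_neq] := pickP (fun j => a == P j i); first by exists j.
  case/eqP: nz_v; rewrite -[v]mulmx1 -sumE mulmx_sumr big1 // => j _.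
  apply: contraFeq (a_neq j) => nz_vE; apply/eqP; apply: (@scalerIl algC _ _ nz_vE).
  by rewrite scalemxAl -vA -mulmxA adjE -scalemxAr.
case=> j ->; apply/eigenvalueP; have [x [y nz_Exy]] := matrix0Pn _ (nzE j).
exists (row x (E j)); first by rewrite -row_mul idem_mul_adj; apply/rowP => z; rewrite !mxE.
by apply/matrix0Pn; exists 0, y; rewrite mxE.
Qed.

Lemma char_table_rows_free (lam : 'I_5 -> algC) :
  (forall i, \sum_j lam j * P j i = 0) -> forall k, lam k = 0.
Proof.
have [spanE nzE orthE _ adjE] := tableEP; move=> lamP0 k; have [c Ek] := spanE k.
pose d j := \sum_i c i * P j i.
have d_delta j : d j = (k == j)%:R.
  apply: (@scalerIl algC _ _ (nzE j)); transitivity (E k *m E j).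
    rewrite Ek mulmx_suml scaler_suml; apply: eq_bigr => i _.
    by rewrite -scalemxAl adjE scalerA.
  by rewrite orthE; case: eqVneq => [->|_]; rewrite ?scale0r.
transitivity (\sum_j lam j * d j).
  rewrite (bigD1 k) //= big1 => [|j nkj]; first by rewrite d_delta eqxx mulr1 addr0.
  by rewrite d_delta eq_sym (negbTE nkj) mulr0.
rewrite (eq_bigr (fun j => \sum_i c i * (lam j * P j i))) => [|j _].
  by rewrite exchange_big big1 // => i _; rewrite -mulr_sumr lamP0 mulr0.
by rewrite mulr_sumr; apply: eq_bigr => i _; rewrite mulrCA.
Qed.

Lemma const1_sum_adj : J = \sum_i adj r i.
Proof.
apply/matrixP => x y; rewrite summxE !mxE (bigD1 (r x y)) //= big1 => [|i nixy].
  by rewrite !mxE eqxx addr0.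
by rewrite mxE eq_sym (negbTE nixy).
Qed.

Lemma const1_mul_idem j : J *m E j = (\sum_i P j i) *: E j.
Proof.
have [_ _ _ _ adjE] := tableEP.
by rewrite const1_sum_adj mulmx_suml scaler_suml; apply: eq_bigr => i _; apply: adjE.
Qed.

Lemma idem_mul_const1 j : E j *m J = (\sum_i P j i) *: E j.
Proof.
rewrite const1_sum_adj mulmx_sumr scaler_suml.
by apply: eq_bigr => i _; apply: idem_mul_adj.
Qed.

Lemma idem_const1_multiple j :
  \sum_i P j i != 0 -> exists2 c, c != 0 & E j = c *: J.
Proof.
have [_ nzE _ _ _] := tableEP; set s := \sum_i P j i => nz_s.
(* s^2 E_j = J E_j J, and J X J is always a multiple of J. *)
have Ej : E j = ((s * s)^-1 * \sum_x \sum_y E j x y) *: J.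
  rewrite -scalerA -const1_mul_mx_const1 const1_mul_idem -scalemxAl idem_mul_const1.
  by rewrite scalerA scalerA -/s -mulrA mulVf ?mulf_neq0 // scale1r.
exists ((s * s)^-1 * \sum_x \sum_y E j x y) => //.
by apply: contraNneq (nzE j) => c0; rewrite Ej c0 scale0r.
Qed.

Lemma row_sum_eq0 j k :
  j != k -> \sum_i P j i = \sum_i P k i -> \sum_i P j i = 0.
Proof.
have [_ nzE orthE _ _] := tableEP; move=> nkj sjk; apply/eqP; apply: contraT => nz_sj.
have nz_sk : \sum_i P k i != 0 by rewrite -sjk.
have [cj nz_cj Ej] := idem_const1_multiple nz_sj.
have [ck nz_ck Ek] := idem_const1_multiple nz_sk.
have nzJ : J != 0 by apply: contraNneq (nzE j) => J0; rewrite Ej J0 scaler0.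
have [x [_ _]] := matrix0Pn _ nzJ.
have nz_n : (n%:R : algC) != 0 by rewrite pnatr_eq0 -lt0n (leq_ltn_trans _ (ltn_ord x)).
move/eqP: (orthE j k); rewrite (negbTE nkj) /= scale0r Ej Ek -scalemxAl -scalemxAr.
by rewrite const1_mul_const1 !scalerA scalemx_eq0 (negbTE nzJ) !mulf_eq0 (negbTE nz_cj)
  (negbTE nz_ck) (negbTE nz_n).
Qed.

Lemma adj_num_distinct_eigenvalues i :
  uniq (codom (P^~ i)) -> num_distinct_eigenvalues (adj r i) 5.
Proof.
exists (codom (P^~ i)); split; rewrite ?size_codom ?card_ord // => a.
exact: iff_trans (eigenvalue_adjP i a) (rwP codomP).
Qed.

End BoseMesner.

(* The shape shared by all three types: x1, x2 stand for k1/2, k2/2, and the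
   paper's r1, r2, t1, t2 are rho + rho^*, sig + sig^*, tau + tau^*, om + om^*. *)
Definition skew4_table (P : 'I_5 -> 'I_5 -> algC) (x1 x2 rho sig tau om : algC) :=
  [/\ P 0 =1 row5 1 x1 x1 x2 x2, P 1 =1 row5 1 rho rho^* tau tau^*,
       P 2 =1 row5 1 sig sig^* om om^*, P 3 =1 row5 1 sig^* sig om^* om
     & P 4 =1 row5 1 rho^* rho tau^* tau].

Section Skew4Table.

Variables (n : nat) (r : 'I_n -> 'I_n -> 'I_5).
Variables (E : 'I_5 -> 'M[algC]_n) (P : 'I_5 -> 'I_5 -> algC).
Variables (x1 x2 rho sig tau om : algC).
Hypothesis tableEP : char_table r E P.
Hypothesis shapeP : skew4_table P x1 x2 rho sig tau om.

Lemma skew4_table_row_sums :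
  1 + (rho + rho^*) + (tau + tau^*) = 0 /\ 1 + (sig + sig^*) + (om + om^*) = 0.
Proof.
have [_ P1 P2 P3 P4] := shapeP; split.
  transitivity (\sum_i P 1 i); first by rewrite big_ord5 !P1 /row5 /=; ring.
  apply: (row_sum_eq0 tableEP (isT : (1 : 'I_5) != 4)).
  by rewrite !big_ord5 !P1 !P4 /row5 /=; ring.
transitivity (\sum_i P 2 i); first by rewrite big_ord5 !P2 /row5 /=; ring.
apply: (row_sum_eq0 tableEP (isT : (2 : 'I_5) != 3)).
by rewrite !big_ord5 !P2 !P3 /row5 /=; ring.
Qed.

Lemma skew4_table_traces_neq :
  rho + rho^* != sig + sig^* /\ tau + tau^* != om + om^*.
Proof.
have [_ P1 P2 P3 P4] := shapeP; have [s1 s2] := skew4_table_row_sums.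
have traces_eqE : (rho + rho^* == sig + sig^*) = (tau + tau^* == om + om^*).
  apply/eqP/eqP => eq_tr; move: s1; rewrite -s2 eq_tr; first by move/addrI.
  by move/addIr/addrI.
suff neq_rs : rho + rho^* != sig + sig^* by rewrite -traces_eqE.
apply/negP => /[dup] /eqP eq_rs; rewrite traces_eqE => /eqP eq_to.
have rows_eq i : P 1 i + P 4 i = P 2 i + P 3 i.
  case: (ord5P i) => [|[|[|[|]]]] ->; rewrite P1 P2 P3 P4 /row5 /=;
  by rewrite ?(addrC rho^*) ?(addrC sig^*) ?(addrC tau^*) ?(addrC om^*) ?eq_rs ?eq_to.
suff /eqP : row5 0 1 (-1) (-1) 1 (1 : 'I_5) = 0 :> algC by rewrite oner_eq0.
apply: (char_table_rows_free tableEP) => i; rewrite big_ord5 /row5 /=.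
transitivity ((P 1 i + P 4 i) - (P 2 i + P 3 i)); first by ring.
by rewrite rows_eq subrr.
Qed.

Lemma skew4_table_column_uniq i :
  x1 \is Num.real -> x2 \is Num.real ->
  rho \isn't Num.real -> sig \isn't Num.real ->
  tau \isn't Num.real -> om \isn't Num.real ->
  rho + rho^* != sig + sig^* -> tau + tau^* != om + om^* ->
  i != 0 -> uniq (codom (P^~ i)).
Proof.
have [P0 P1 P2 P3 P4] := shapeP; move=> x1R x2R rhoNR sigNR tauNR omNR rs_neq to_neq.
have conj_uniq x a b : x \is Num.real -> a \isn't Num.real -> b \isn't Num.real ->
    a + a^* != b + b^* -> uniq [:: x; a^*; b^*; b; a].
  have := @uniq_conj_pairs _ x a^* b^*.
  by rewrite !conjCK !CrealJ addrC [b + _]addrC.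
case: (ord5P i) => [|[|[|[|]]]] -> //= _; rewrite codom_ord5 P0 P1 P2 P3 P4 /row5 /=.
- exact: uniq_conj_pairs.
- exact: conj_uniq.
- exact: uniq_conj_pairs.
- exact: conj_uniq.
Qed.

End Skew4Table.

Lemma type3_skew4_table P : type3_table P ->
  exists x1 x2 rho sig tau om, [/\ skew4_table P x1 x2 rho sig tau om,
    x1 \is Num.real, x2 \is Num.real &
    [/\ rho \isn't Num.real, sig \isn't Num.real, tau \isn't Num.real & om \isn't Num.real]].
Proof.
case=> k1 [k2 [r1 [r2 [t1 [t2 [b [c [y [z]]]]]]]]].
case=> [[k1R k2R r1R r2R /andP[t1R t2R]] [b_gt0 c_gt0 y_gt0 z_gt0] shapeP].
exists (k1 / 2), (k2 / 2), ((r1 + sqrtneg y) / 2), ((r2 + sqrtneg b) / 2).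
exists ((t1 + sqrtneg z) / 2), ((t2 - sqrtneg c) / 2).
have half_real (x : algC) : x \is Num.real -> x / 2 \is Num.real.
  by move=> xR; rewrite rpredM ?rpredV ?rpred_nat.
have sqrtC_real_neq0 (w : algC) : 0 < w -> sqrtC w \is Num.real /\ sqrtC w != 0.
  by move=> w_gt0; rewrite sqrtC_real ?ltW // sqrtC_eq0 gt_eqF.
have [yR nz_y] := sqrtC_real_neq0 y y_gt0; have [bR nz_b] := sqrtC_real_neq0 b b_gt0.
have [zR nz_z] := sqrtC_real_neq0 z z_gt0; have [cR nz_c] := sqrtC_real_neq0 c c_gt0.
split; [by [] | exact: half_real | exact: half_real | split].
- exact: half_rect_nonreal.
- exact: half_rect_nonreal.
- exact: half_rect_nonreal.
- by rewrite /sqrtneg -mulrN half_rect_nonreal ?rpredN ?oppr_eq0.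
Qed.

Theorem proposition4p3 (n : nat) (r : 'I_n -> 'I_n -> 'I_5) :
  is_assoc_scheme4 r -> skew_1234 r ->
  (exists (E : 'I_5 -> 'M[algC]_n) (P : 'I_5 -> 'I_5 -> algC),
      char_table r E P /\ type3_table P) ->
  forall i : 'I_5, i != 0 -> num_distinct_eigenvalues (adj r i) 5.
Proof.
(* The scheme axioms and skew-symmetry enter only through [char_table] and the
   shape of the type 3 table. *)
move=> _ _ [E [P [tableEP /type3_skew4_table]]].
case=> x1 [x2 [rho [sig [tau [om [shapeP x1R x2R [rhoNR sigNR tauNR omNR]]]]]]] i nz_i.
have [rs_neq to_neq] := skew4_table_traces_neq tableEP shapeP.
apply: (adj_num_distinct_eigenvalues tableEP).
exact: (skew4_table_column_uniq shapeP).
Qed.
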